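(* Let $0\le\eta_1<1/5$ and let $\sigma,\sigma_0:[n]\to[K]$ be assignments all of whose community sizes lie in $[(1-\eta_1)\frac nK,(1+\eta_1)\frac nK]$, with $d(\sigma,\sigma_0)=m$ for an integer $0<m<n$. Set $\eta=5\eta_1$. Then $$\alpha(\sigma;\sigma_0)\wedge\gamma(\sigma;\sigma_0)\ge\begin{cases}\frac{(1-\eta)nm}{K}-m^2, & m\le\frac{n}{2K},\\ \frac{2(1-\eta)nm}{9K}, & m>\frac{n}{2K}.\end{cases}$$
   Context: $d(\sigma_1,\sigma_2)=\min_\delta d_H(\sigma_1,\delta\circ\sigma_2)$ over permutations $\delta$ of $[K]$, $d_H$ the Hamming distance. $\alpha(\sigma;\sigma_0)=|\{(i,j):i<j,\ \sigma_0(i)=\sigma_0(j),\ \sigma(i)\ne\sigma(j)\}|$ and $\gamma(\sigma;\sigma_0)=|\{(i,j):i<j,\ \sigma_0(i)\ne\sigma_0(j),\ \sigma(i)=\sigma(j)\}|$. *)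

From HB Require Import structures.
From mathcomp Require Import all_boot all_order all_algebra all_fingroup.
Set Implicit Arguments. Unset Strict Implicit. Unset Printing Implicit Defensive.

Definition assignment (n K : nat) := {ffun 'I_n -> 'I_K}.

Definition dH (n K : nat) (s1 s2 : assignment n K) : nat :=
  #|[set i : 'I_n | s1 i != s2 i]|.

(* d(s1,s2) = min over permutations delta of [K] of dH(s1, delta o s2).
   Each dH is <= n, so n is a harmless neutral element for the min. *)
Definition dist (n K : nat) (s1 s2 : assignment n K) : nat :=
  \big[minn/n]_(delta : {perm 'I_K}) dH s1 [ffun i => delta (s2 i)].

Definition alpha (n K : nat) (s s0 : assignment n K) : nat :=
  #|[set p : 'I_n * 'I_n | (p.1 < p.2) && (s0 p.1 == s0 p.2) && (s p.1 != s p.2)]|.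

Definition gamma (n K : nat) (s s0 : assignment n K) : nat :=
  #|[set p : 'I_n * 'I_n | (p.1 < p.2) && (s0 p.1 != s0 p.2) && (s p.1 == s p.2)]|.

Definition csize (n K : nat) (s : assignment n K) (k : 'I_K) : nat :=
  #|[set i : 'I_n | s i == k]|.

Definition balanced (n K : nat) (e : rat) (s : assignment n K) : Prop :=
  forall k : 'I_K,
    ((1 - e) * n%:R / K%:R <= (csize s k)%:R)%R /\
    ((csize s k)%:R <= (1 + e) * n%:R / K%:R)%R.

From HB Require Import structures.
From mathcomp Require Import all_boot all_order all_algebra all_fingroup.
From mathcomp Require Import ring lra.
Import Order.TTheory GRing.Theory Num.Theory.
Set Implicit Arguments. Unset Strict Implicit. Unset Printing Implicit Defensive.
Local Open Scope ring_scope.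

(* Let N k l count the nodes put in community k by s0 and in l by s, and let d be
   a permutation attaining dist s s0 = m, so that m is the total mass of the rows
   of N outside the matched cells (k, d k).  Counting ordered pairs gives
   2 alpha = sum_{k,l} N k l * (row k - N k l), and each row is bounded in two ways:
   every other entry of row k is at least the matched entry, which is at least
   (row k - m); and since composing d with a transposition cannot improve the
   matching, 2 N k l <= N k (d k) + col l whenever l <> d k.  With the balanced
   sizes these give the quadratic and the linear bound; gamma s s0 = alpha s0 s
   and dist is symmetric, so the same bounds hold for gamma. *)

Lemma card_lt_pairs n (P : rel 'I_n) : symmetric P -> irreflexive P ->
  (2 * #|[set p : 'I_n * 'I_n | (p.1 < p.2)%N && P p.1 p.2]|)%N =
  #|[set p : 'I_n * 'I_n | P p.1 p.2]|.
Proof.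
move=> symP irrP; set A := [set p | _].
pose swap (p : 'I_n * 'I_n) := (p.2, p.1).
have swapK : involutive swap by case.
have swapA : swap @: A = [set p : 'I_n * 'I_n | (p.2 < p.1)%N && P p.1 p.2].
  apply/setP => p; rewrite -[p in LHS]swapK mem_imset; last exact: inv_inj.
  by rewrite !inE symP.
have A_disj : A :&: swap @: A = set0.
  apply/setP => p; rewrite swapA !inE.
  by case: ltngtP; rewrite ?andbF.
rewrite mul2n -addnn -{2}(card_imset _ (inv_inj swapK)) -cardsUI A_disj cards0 addn0.
apply: eq_card => p; rewrite swapA !inE.
by case: ltngtP => [||/val_inj eq_p]; rewrite /= ?orbF // eq_p irrP.
Qed.

Lemma dH_le_n n K (s1 s2 : assignment n K) : (dH s1 s2 <= n)%N.
Proof. by rewrite /dH -[X in (_ <= X)%N]card_ord max_card. Qed.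

Lemma dist_le_dH n K (s s0 : assignment n K) (d : {perm 'I_K}) :
  (dist s s0 <= dH s [ffun i => d (s0 i)])%N.
Proof.
rewrite /dist -minEnat.
exact: (bigmin_le _ d (fun d : {perm _} => dH s [ffun i => d (s0 i)])).
Qed.

Lemma dist_attained n K (s s0 : assignment n K) :
  exists d : {perm 'I_K}, dist s s0 = dH s [ffun i => d (s0 i)].
Proof.
rewrite /dist -minEnat; eexists.
by apply: (bigmin_eq_arg _ (1%g : {perm 'I_K})) => // d _; apply: dH_le_n.
Qed.

Lemma dH_perm_sym n K (s s0 : assignment n K) (d : {perm 'I_K}) :
  dH s0 [ffun i => d (s i)] = dH s [ffun i => (d^-1)%g (s0 i)].
Proof.
rewrite /dH; apply: eq_card => i; rewrite !inE !ffunE.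
by rewrite [s i == _]eq_sym (can2_eq (permKV d) (permK d)) eq_sym.
Qed.

Lemma dist_le_sym n K (s s0 : assignment n K) : (dist s0 s <= dist s s0)%N.
Proof.
have [d ->] := dist_attained s s0.
by rewrite -[d]invgK -dH_perm_sym dist_le_dH.
Qed.

Lemma dist_sym n K (s s0 : assignment n K) : dist s0 s = dist s s0.
Proof. by apply/eqP; rewrite eqn_leq !dist_le_sym. Qed.

Lemma gammaE n K (s s0 : assignment n K) : gamma s s0 = alpha s0 s.
Proof.
apply: eq_card => p; rewrite !inE.
by case: (_ < _)%N; case: (s0 _ == _); case: (s _ == _).
Qed.

Section Overlap.
Variables (F : realFieldType) (n K : nat) (s s0 : assignment n K).

Definition overlap (k l : 'I_K) : F := #|[set i | (s0 i == k) && (s i == l)]|%:R.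

Lemma overlap_ge0 k l : 0 <= overlap k l.
Proof. exact: ler0n. Qed.

Lemma sum_by_overlap (G : 'I_K -> 'I_K -> F) :
  \sum_i G (s0 i) (s i) = \sum_k \sum_l overlap k l * G k l.
Proof.
rewrite (partition_big (fun i => (s0 i, s i)) xpredT) //= [RHS]pair_bigA.
apply: eq_bigr => -[k l] _ /=.
rewrite (eq_bigr (fun=> G k l)) => [|i /eqP[-> ->] //].
by rewrite sumr_const /overlap cardsE mulr_natl.
Qed.

Lemma card_by_overlap (P : 'I_K -> 'I_K -> bool) :
  (#|[set i | P (s0 i) (s i)]|%:R : F) = \sum_k \sum_(l | P k l) overlap k l.
Proof.
rewrite -sum1_card natr_sum big_mkcond /=.
rewrite (eq_bigr (fun i => (P (s0 i) (s i))%:R)) => [|i _]; last by rewrite inE; case: P.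
rewrite (sum_by_overlap (fun k l => (P k l)%:R)).
apply: eq_bigr => k _; rewrite [RHS]big_mkcond; apply: eq_bigr => l _.
by case: (P k l); rewrite ?mulr1 ?mulr0.
Qed.

Definition offdiag (k j : 'I_K) : F := \sum_(l | l != j) overlap k l.

Lemma offdiag_ge0 k j : 0 <= offdiag k j.
Proof. by apply: sumr_ge0 => l _; apply: overlap_ge0. Qed.

Lemma card_row_overlap k (Q : pred 'I_K) :
  (#|[set i | (s0 i == k) && Q (s i)]|%:R : F) = \sum_(l | Q l) overlap k l.
Proof.
rewrite (card_by_overlap (fun a b => (a == k) && Q b)) (bigD1 k) //=.
rewrite [X in _ + X]big1 ?addr0; first by apply: eq_bigl => l; rewrite eqxx.
by move=> k' /negbTE nk; rewrite big_pred0 // => l; rewrite nk.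
Qed.

Lemma csize0_overlap k j : (csize s0 k)%:R = overlap k j + offdiag k j.
Proof.
have -> : csize s0 k = #|[set i | (s0 i == k) && predT (s i)]|.
  by apply: eq_card => i; rewrite !inE andbT.
by rewrite card_row_overlap (bigD1 j).
Qed.

Lemma csize_overlap l : (csize s l)%:R = \sum_k overlap k l.
Proof.
rewrite /csize (card_by_overlap (fun _ b => b == l)).
by apply: eq_bigr => k _; rewrite big_pred1_eq.
Qed.

Lemma dH_overlap (d : {perm 'I_K}) :
  (dH s [ffun i => d (s0 i)])%:R = \sum_k offdiag k (d k).
Proof.
rewrite -(card_by_overlap (fun a b => b != d a)) /dH.
by congr (_%:R); apply: eq_card => i; rewrite !inE ffunE.
Qed.

Lemma alpha_overlap : 2 * (alpha s s0)%:R = \sum_k \sum_l overlap k l * offdiag k l.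
Proof.
pose P i j := (s0 i == s0 j) && (s i != s j).
have symP : symmetric P by move=> i j; rewrite /P eq_sym [s i == _]eq_sym.
have irrP : irreflexive P by move=> i; rewrite /P !eqxx.
have -> : alpha s s0 = #|[set p : 'I_n * 'I_n | (p.1 < p.2)%N && P p.1 p.2]|.
  by apply: eq_card => p; rewrite !inE andbA.
rewrite -natrM (card_lt_pairs symP irrP).
have -> : #|[set p : 'I_n * 'I_n | P p.1 p.2]| = \sum_i #|[set j | P i j]|.
  rewrite -sum1_card (eq_bigl (fun p => xpredT p.1 && P p.1 p.2)) => [|p]; last by rewrite inE.
  rewrite -(pair_big_dep xpredT P (fun _ _ => 1%N)) /=; apply: eq_bigr => i _.
  by rewrite -sum1_card; apply: eq_bigl => j; rewrite inE.
rewrite natr_sum -(sum_by_overlap offdiag); apply: eq_bigr => i _.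
rewrite /offdiag -(card_row_overlap _ (fun l => l != s i)).
by congr (_%:R); apply: eq_card => j; rewrite !inE symP.
Qed.

Lemma offdiagE k j : offdiag k j = (csize s0 k)%:R - overlap k j.
Proof. by rewrite (csize0_overlap k j) addrC addKr. Qed.

Lemma overlap_le_offdiag k j l : j != l -> overlap k j <= offdiag k l.
Proof.
move=> jl; rewrite /offdiag (bigD1 j) //= lerDl.
by apply: sumr_ge0 => i _; apply: overlap_ge0.
Qed.

Lemma overlap_col_le k k' l : k != k' -> overlap k l + overlap k' l <= (csize s l)%:R.
Proof.
move=> kk'; rewrite csize_overlap (bigD1 k) //= (bigD1 k') 1?eq_sym //= addrA lerDl.
by apply: sumr_ge0 => i _; apply: overlap_ge0.
Qed.

Lemma row_alpha_ge k j (h : F) : (forall l, l != j -> h <= offdiag k l) ->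
  offdiag k j * (overlap k j + h) <= \sum_l overlap k l * offdiag k l.
Proof.
move=> h_le; rewrite (bigD1 j) //= mulrDr [offdiag k j * _]mulrC lerD2l.
rewrite mulrC {1}/offdiag mulr_sumr; apply: ler_sum => l jl.
by rewrite mulrC ler_wpM2l ?overlap_ge0 ?h_le.
Qed.

Section OptimalMatching.
Variable d : {perm 'I_K}.
Hypothesis d_opt :
  forall d' : {perm 'I_K}, (dH s [ffun i => d (s0 i)] <= dH s [ffun i => d' (s0 i)])%N.

Lemma diag_overlap_max (d' : {perm 'I_K}) :
  \sum_k overlap k (d' k) <= \sum_k overlap k (d k).
Proof.
have := d_opt d'; rewrite -(ler_nat F) !dH_overlap.
under eq_bigr do rewrite offdiagE; under [X in _ <= X]eq_bigr do rewrite offdiagE.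
by rewrite !sumrB lerD2l lerN2.
Qed.

(* Rerouting row k to column l and row d^-1 l to column d k cannot gain. *)
Lemma overlap_swap_le k l :
  l != d k -> overlap k l <= overlap k (d k) + overlap ((d^-1)%g l) l.
Proof.
move=> ldk; set k' := (d^-1)%g l.
have dk' : d k' = l by rewrite permKV.
have k'k : k' != k by apply: contra ldk => /eqP <-; rewrite dk'.
have := diag_overlap_max (d * tperm (d k) l)%g.
have split_kk' (f : 'I_K -> 'I_K) : \sum_i overlap i (f i) =
    overlap k (f k) + overlap k' (f k') + \sum_(i | (i != k) && (i != k')) overlap i (f i).
  by rewrite (bigD1 k) //= (bigD1 k') //= addrA.
rewrite !split_kk' !permM tpermL dk' tpermR.
rewrite (eq_bigr (fun i => overlap i (d i))) => [|i /andP[ik ik']].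
  by have := overlap_ge0 k' (d k); lra.
rewrite permM tpermD // -?dk' (inj_eq perm_inj) eq_sym //.
Qed.

Variables lo hi : F.
Hypothesis lo_le_csize0 : forall k, lo <= (csize s0 k)%:R.
Hypothesis csize_le_hi : forall l, (csize s l)%:R <= hi.

Let m : F := (dH s [ffun i => d (s0 i)])%:R.

Lemma offdiag_le_dH k : offdiag k (d k) <= m.
Proof.
rewrite /m dH_overlap (bigD1 k) //= lerDl.
by apply: sumr_ge0 => i _; apply: offdiag_ge0.
Qed.

Lemma alpha_ge_quadratic : (lo - m) * m <= (alpha s s0)%:R.
Proof.
have row_ge k : 2 * (lo - m) * offdiag k (d k) <= \sum_l overlap k l * offdiag k l.
  apply: le_trans (row_alpha_ge (j := d k) (h := overlap k (d k)) _) => [|l ldk]; last first.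
    by apply: overlap_le_offdiag; rewrite eq_sym.
  have := offdiagE k (d k); have := lo_le_csize0 k; have := offdiag_le_dH k.
  have := offdiag_ge0 k (d k); nra.
suff : 2 * (lo - m) * m <= 2 * (alpha s s0)%:R by lra.
rewrite alpha_overlap {2}/m dH_overlap mulr_sumr.
by apply: ler_sum => k _; apply: row_ge.
Qed.

Lemma twice_overlap_le k l : l != d k -> 2 * overlap k l <= overlap k (d k) + hi.
Proof.
move=> ldk; have := overlap_swap_le ldk; have := csize_le_hi l.
have kk' : k != (d^-1)%g l by apply: contra ldk => /eqP ->; rewrite permKV.
have := overlap_col_le l kk'; lra.
Qed.

Lemma alpha_ge_linear : m * (2 * lo - hi) / 4 <= (alpha s s0)%:R.
Proof.
have row_ge k : offdiag k (d k) * (2 * lo - hi) / 2 <= \sum_l overlap k l * offdiag k l.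
  apply: le_trans (row_alpha_ge (j := d k) (h := lo - (overlap k (d k) + hi) / 2) _)
    => [|l ldk].
    have := offdiag_ge0 k (d k); have := overlap_ge0 k (d k); nra.
  have := twice_overlap_le ldk; have := offdiagE k l; have := lo_le_csize0 k; lra.
suff : m * (2 * lo - hi) / 2 <= 2 * (alpha s s0)%:R by lra.
rewrite alpha_overlap /m dH_overlap !mulr_suml.
by apply: ler_sum => k _; apply: row_ge.
Qed.

End OptimalMatching.
End Overlap.

Lemma alpha_ge_dist (F : realFieldType) n K (s s0 : assignment n K) (lo hi : F) :
  (forall k, lo <= (csize s0 k)%:R) -> (forall l, (csize s l)%:R <= hi) ->
  let m : F := (dist s s0)%:R in
  (lo - m) * m <= (alpha s s0)%:R /\ m * (2 * lo - hi) / 4 <= (alpha s s0)%:R.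
Proof.
move=> lo_le le_hi /=; have [d dd] := dist_attained s s0.
have d_opt (d' : {perm 'I_K}) : (dH s [ffun i => d (s0 i)] <= dH s [ffun i => d' (s0 i)])%N.
  by rewrite -dd dist_le_dH.
by rewrite dd; split; [apply: alpha_ge_quadratic | apply: alpha_ge_linear].
Qed.

(* Both bounds hold for every m; the case split only selects the better one. *)
Lemma alpha_ge_balanced n K m (eta1 : rat) (s s0 : assignment n K) :
  (0 < K)%N -> 0 <= eta1 -> balanced eta1 s -> balanced eta1 s0 -> dist s s0 = m ->
  (if (m%:R <= n%:R / (2 * K)%:R :> rat)
   then (1 - 5%:R * eta1) * n%:R * m%:R / K%:R - (m ^ 2)%:R
   else 2%:R * (1 - 5%:R * eta1) * n%:R * m%:R / (9 * K)%:R)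
  <= (alpha s s0)%:R.
Proof.
move=> K_gt0 eta1_ge0 bal_s bal_s0 dist_m.
have [] := alpha_ge_dist (fun k => (bal_s0 k).1) (fun l => (bal_s l).2).
rewrite dist_m; set M : rat := m%:R; set t : rat := n%:R / K%:R.
have K_neq0 : K%:R != 0 :> rat by rewrite pnatr_eq0 -lt0n.
have tM_ge0 : 0 <= t * M by rewrite !mulr_ge0 ?invr_ge0 ?ler0n.
have := mulr_ge0 eta1_ge0 tM_ge0.
case: ifP => _ quad lin.
- have -> : (1 - 5%:R * eta1) * n%:R * M / K%:R - (m ^ 2)%:R
         = ((1 - eta1) * n%:R / K%:R - M) * M - 4 * (eta1 * (t * M)).
    by rewrite natrX /t /M; field.
  lra.
- have -> : 2%:R * (1 - 5%:R * eta1) * n%:R * M / (9 * K)%:R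
         = M * (2 * ((1 - eta1) * n%:R / K%:R) - (1 + eta1) * n%:R / K%:R) / 4
           - (t * M) / 36%:R - 13%:R / 36%:R * (eta1 * (t * M)).
    by rewrite natrM /t /M; field.
  lra.
Qed.

Theorem lemma4 (n K m : nat) (eta1 : rat) (s s0 : assignment n K) :
  0 <= eta1 -> eta1 < 1 / 5%:R ->
  balanced eta1 s -> balanced eta1 s0 ->
  dist s s0 = m -> (0 < m)%N -> (m < n)%N ->
  let eta := 5%:R * eta1 in
  (if (m%:R <= n%:R / (2 * K)%:R :> rat)
   then (1 - eta) * n%:R * m%:R / K%:R - (m ^ 2)%:R
   else 2%:R * (1 - eta) * n%:R * m%:R / (9 * K)%:R)
  <= (minn (alpha s s0) (gamma s s0))%:R :> rat.
Proof.
move=> eta1_ge0 _ bal_s bal_s0 dist_m _ m_lt_n /=.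
have n_gt0 : (0 < n)%N by apply: leq_ltn_trans m_lt_n.
have K_gt0 : (0 < K)%N := leq_ltn_trans (leq0n _) (ltn_ord (s (Ordinal n_gt0))).
rewrite gammaE; case: leqP => _.
- exact: alpha_ge_balanced.
- by apply: alpha_ge_balanced; rewrite // dist_sym.
Qed.
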